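(* Let $n\geq 4$, let $\mathfrak g=sl_n(\mathbb R)$ and let $G$ be the connected, simply connected Lie group with Lie algebra $\mathfrak g$ (the two-sheeted covering of $SL_n(\mathbb R)$), acting on $\mathfrak g$ by the adjoint action. Let $B\subset G$ be the inverse image in $G$ of the subgroup of upper triangular matrices of $SL_n(\mathbb R)$. Let $k$ be an integer with $2\leq k\leq n/2$ and $\varepsilon\in\{1,-1\}$, put $$X_{k,\varepsilon}=\sum_{i=1}^{k-1}E_{n+1-i,\,i}+\varepsilon\,E_{n+1-k,\,k}\in\mathfrak g,$$ where $E_{a,b}$ denotes the elementary matrix with a $1$ in position $(a,b)$, and let $O_{k,\varepsilon}=G\cdot X_{k,\varepsilon}$ be its adjoint orbit. Then the $B$-orbit $B\cdot X_{k,\varepsilon}$ is the unique dense $B$-orbit contained in $O_{k,\varepsilon}$.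
   Context: In the paper's notation, with the usual root system $\varepsilon_i-\varepsilon_j$ of $sl_n$, simple roots $\alpha_k=\varepsilon_k-\varepsilon_{k+1}$, root vectors $X_{\varepsilon_i-\varepsilon_j}=E_{i,j}$, $\beta_{i,j}=\alpha_i+\dots+\alpha_j$ and $\beta_i=\beta_{i,n-i}$, one has $X_{-\beta_i}=E_{n+1-i,i}$, so $X_{k,\varepsilon}=\sum_{i=1}^{k-1}X_{-\beta_i}+\varepsilon X_{-\beta_k}$. The orbits $O_{k,\varepsilon}$ ($2\le k\le n/2$) are the non-minimal spherical nilpotent orbits of $sl_n(\mathbb R)$. *)

From HB Require Import structures.
From mathcomp Require Import all_boot all_order all_algebra.
From mathcomp Require Import all_classical all_reals topology normedtype.
Set Implicit Arguments. Unset Strict Implicit. Unset Printing Implicit Defensive.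
Import Order.TTheory GRing.Theory Num.Theory.
Import numFieldNormedType.Exports.
Local Open Scope ring_scope.
Local Open Scope classical_set_scope.

(* Elementary matrix E_{a,b}, 1-based indices as in the paper. *)
Definition Emx (R : realType) (n a b : nat) : 'M[R]_n :=
  \matrix_(i < n, j < n) (((i.+1 == a) && (j.+1 == b))%N)%:R.

Definition sl (R : realType) (n : nat) : set 'M[R]_n := [set X | \tr X = 0].

Definition SL (R : realType) (n : nat) : set 'M[R]_n := [set g | \det g = 1].

Definition SLupper (R : realType) (n : nat) : set 'M[R]_n :=
  [set g | \det g = 1 /\ forall i j : 'I_n, (j < i)%N -> g i j = 0].

Definition Ad (R : realType) (n : nat) (g X : 'M[R]_n) : 'M[R]_n :=
  g *m X *m invmx g.

Definition Ad_orbit (R : realType) (n : nat) (H : set 'M[R]_n) (X : 'M[R]_n)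
  : set 'M[R]_n := [set Ad g X | g in H].

(* S is a dense subset of O (for the subspace topology of O inside 'M_n) *)
Definition dense_in (T : topologicalType) (S O : set T) : Prop :=
  S `<=` O /\ O `<=` closure S.

Definition Xke (R : realType) (n k : nat) (eps : R) : 'M[R]_n :=
  \sum_(1 <= i < k) Emx R n (n.+1 - i) i + eps *: Emx R n (n.+1 - k) k.

Arguments Emx R n a b : clear implicits.
Arguments sl R n : clear implicits.
Arguments SL R n : clear implicits.
Arguments SLupper R n : clear implicits.
Arguments Xke R n k eps : clear implicits.

(* Let C(Y) be the k x k block of Y formed by its last k rows, read from the
   bottom up, and its first k columns, and let [corner_minors k Y] be the
   product of the leading principal minors of C(Y).
   If Y = h X h^-1 with det h > 0 and these minors do not vanish, they are the
   pivots of a column-by-column construction of an upper triangular F with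
   Y F = F X.  Multiplying F by a diagonal matrix commuting with X brings
   det F to 1; this fails only if n = 2k and det F < 0, which is impossible
   because every matrix commuting with X then has determinant >= 0.  So
   Y lies in B.X.
   Density: for g in SL_n put g_t = g + t (1 - g).  The polynomial
   t |-> det g_t * corner_minors (g_t X adj g_t) is nonzero, as its value at
   t = 1 is corner_minors X, so Ad g_t X lies in B.X for arbitrarily small
   t > 0, and it tends to Ad g X.
   Uniqueness: corner_minors does not vanish on a neighbourhood of X, which a
   dense B-orbit in O must meet; the meeting point lies in B.X. *)

From HB Require Import structures.
From mathcomp Require Import all_boot all_order all_algebra.
From mathcomp Require Import all_classical all_reals topology normedtype.
From mathcomp Require Import derive zify.
Import Order.TTheory GRing.Theory Num.Theory.
Import numFieldNormedType.Exports.
Local Open Scope ring_scope.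
Local Open Scope classical_set_scope.
Set Implicit Arguments. Unset Strict Implicit. Unset Printing Implicit Defensive.

Section CornerMinors.
Variables (T : comNzRingType) (n : nat).

Definition rev_pid_mx k : 'M[T]_n :=
  \matrix_(r, c) ((c == rev_ord r) && (r < k)%N)%:R.

(* Rows [r >= m] of [A] are replaced by those of the identity, so that
   [\det (lead_rows m A)] is the leading principal minor of order [m] of [A]. *)
Definition lead_rows m (A : 'M[T]_n) : 'M[T]_n := pid_mx m *m A + copid_mx m.

(* The [k x k] block of rows [n, ..., n + 1 - k] and columns [1, ..., k],
   padded with zeros. *)
Definition corner k (Y : 'M[T]_n) : 'M[T]_n := rev_pid_mx k *m Y *m pid_mx k.

Definition corner_minors k (Y : 'M[T]_n) : T :=
  \prod_(m < k.+1) \det (lead_rows m (corner k Y)).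

Lemma pid_mulmxE p k (M : 'M[T]_(n, p)) a b :
  (pid_mx k *m M) a b = if (a < k)%N then M a b else 0.
Proof.
rewrite mxE (bigD1 a) //= big1 => [|i ia]; last first.
  by rewrite mxE eq_sym (negbTE (ia : (i : nat) != a)) mul0r.
by rewrite mxE eqxx addr0; case: ifP; rewrite ?mul1r ?mul0r.
Qed.

Lemma mulmx_pidE p k (M : 'M[T]_(p, n)) a b :
  (M *m pid_mx k) a b = if (b < k)%N then M a b else 0.
Proof.
rewrite mxE (bigD1 b) //= big1 => [|i ib]; last first.
  by rewrite mxE (negbTE (ib : (i : nat) != b)) mulr0.
by rewrite mxE eqxx addr0; case: ifP; rewrite ?mulr1 ?mulr0.
Qed.

Lemma rev_pid_mulmxE p k (M : 'M[T]_(n, p)) r c :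
  (rev_pid_mx k *m M) r c = if (r < k)%N then M (rev_ord r) c else 0.
Proof.
rewrite mxE (bigD1 (rev_ord r)) //= big1 => [|i ir]; last first.
  by rewrite mxE (negbTE ir) mul0r.
by rewrite mxE eqxx addr0; case: ifP; rewrite ?mul1r ?mul0r.
Qed.

Lemma pid_rev_pid_mx k : pid_mx k *m rev_pid_mx k = rev_pid_mx k.
Proof.
apply/matrixP => r c; rewrite pid_mulmxE mxE.
by case: (r < k)%N; rewrite ?andbF.
Qed.

Lemma copid_mulmxE p k (M : 'M[T]_(n, p)) a b :
  (copid_mx k *m M) a b = if (a < k)%N then 0 else M a b.
Proof.
rewrite /copid_mx mulmxBl mul1mx [(_ - _ : 'M_(n, p)) a b]mxE.
by rewrite [(- _ : 'M_(n, p)) a b]mxE pid_mulmxE; case: ifP; rewrite ?subrr ?subr0.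
Qed.

Lemma lead_rows_mulmxE m p (A : 'M[T]_n) (v : 'M[T]_(n, p)) r c :
  (lead_rows m A *m v) r c = if (r < m)%N then (A *m v) r c else v r c.
Proof.
rewrite mulmxDl -mulmxA [(_ + _ : 'M_(n, p)) r c]mxE pid_mulmxE copid_mulmxE.
by case: ifP; rewrite ?addr0 ?add0r.
Qed.

Lemma lead_rowsE m (A : 'M[T]_n) r c :
  lead_rows m A r c = if (r < m)%N then A r c else (r == c)%:R.
Proof. by rewrite -[lead_rows m A]mulmx1 lead_rows_mulmxE mulmx1 mxE. Qed.

Lemma lead_rows_corner k (Y : 'M[T]_n) :
  lead_rows k (corner k Y) = corner k Y + copid_mx k.
Proof. by rewrite /lead_rows /corner !mulmxA pid_rev_pid_mx. Qed.

Lemma corner_mulmxE k p (Y : 'M[T]_n) (v : 'M[T]_(n, p)) r c :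
  pid_mx k *m v = v ->
  (corner k Y *m v) r c = if (r < k)%N then (Y *m v) (rev_ord r) c else 0.
Proof. by move=> Pv; rewrite /corner -!mulmxA Pv rev_pid_mulmxE. Qed.

Lemma cornerZ k c (Y : 'M[T]_n) : corner k (c *: Y) = c *: corner k Y.
Proof. by rewrite /corner -scalemxAr -scalemxAl. Qed.

End CornerMinors.

Arguments rev_pid_mx {T n} k.

Lemma lead_rowsZ (T : comNzRingType) n m c (A : 'M[T]_n) :
  lead_rows m (c *: A) =
  diag_mx (\row_r (if (r < m)%N then c else 1)) *m lead_rows m A.
Proof.
apply/matrixP => r j; rewrite mul_diag_mx lead_rowsE [RHS]mxE lead_rowsE !mxE.
by case: ifP; rewrite ?mul1r.
Qed.

Lemma corner_minorsZ (F : fieldType) n k c (Y : 'M[F]_n) :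
  c != 0 -> corner_minors k Y != 0 -> corner_minors k (c *: Y) != 0.
Proof.
move=> c0 /prodf_neq0 Y0; apply/prodf_neq0 => m _.
rewrite cornerZ lead_rowsZ det_mulmx det_diag mulf_neq0 ?Y0 //.
by apply/prodf_neq0 => r _; rewrite mxE; case: ifP; rewrite ?oner_eq0.
Qed.

Definition Xke_coef (R : realType) k (eps : R) (j : nat) : R :=
  if j == k.-1 then eps else 1.

Lemma XkeE (R : realType) n k eps (a b : 'I_n) :
  Xke R n k eps a b =
  if (b < k)%N && (a + b == n.-1)%N then Xke_coef k eps b else 0.
Proof.
rewrite /Xke /Emx !mxE summxE.
rewrite (eq_bigr (fun i => if i == b.+1 then ((a.+1 == n.+1 - i)%N)%:R else 0));
  last by move=> i _; rewrite mxE; case: (eqVneq i b.+1) => [->|_];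
    rewrite ?eqxx ?andbT ?andbF.
rewrite -big_mkcond big_nat1_eq /Xke_coef.
have := ltn_ord a; have := ltn_ord b.
case: (ltngtP b.+1 k) => hbk ha hb.
- have -> : (a.+1 == (n.+1 - b.+1)%N) = (a + b == n.-1)%N by apply/eqP/eqP; lia.
  have -> : (b == k.-1 :> nat) = false by apply/eqP; lia.
  by rewrite andbF /= mulr0 addr0; case: eqP.
- by rewrite !andbF /= ?mulr0n ?mulr0 ?addr0.
- subst k; rewrite andbT /= add0r eqxx.
  have -> : (a.+1 == (n.+1 - b.+1)%N) = (a + b == n.-1)%N by apply/eqP/eqP; lia.
  by case: eqP; rewrite ?mulr1 ?mulr0.
Qed.

Section Xke.
Variables (R : realType) (n k : nat) (eps : R).
Hypotheses (k_gt0 : (0 < k)%N) (k2_le_n : (k.*2 <= n)%N) (eps_sign : eps = 1 \/ eps = -1).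
Local Notation X := (Xke R n k eps).

Lemma Xke_coef_neq0 j : Xke_coef k eps j != 0.
Proof.
by rewrite /Xke_coef; case: ifP; [case: eps_sign => ->|]; rewrite ?oppr_eq0 oner_eq0.
Qed.

Lemma Xke_trace : \tr X = 0.
Proof.
rewrite /mxtrace big1 // => i _; rewrite XkeE.
case: ifP => // /andP [ik /eqP ii]; have := ltn_ord i; lia.
Qed.

Lemma mulmx_XkeE m (M : 'M[R]_(m, n)) a (j : 'I_n) :
  (M *m X) a j = if (j < k)%N then M a (rev_ord j) * Xke_coef k eps j else 0.
Proof.
rewrite mxE (bigD1 (rev_ord j)) //= big1 => [|i ij].
  rewrite XkeE /=.
  have -> : (n - j.+1 + j == n.-1)%N by apply/eqP; have := ltn_ord j; lia.
  by rewrite andbT addr0; case: ifP; rewrite ?mulr0.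
rewrite XkeE; case: ifP; rewrite ?mulr0 // => /andP [_ /eqP e].
by case/eqP: ij; apply: val_inj => /=; have := ltn_ord j; lia.
Qed.

Lemma Xke_sqr : X *m X = 0.
Proof.
apply/matrixP => a b; rewrite mulmx_XkeE XkeE [RHS]mxE.
case: ifP => // bk /=.
have -> : (n - b.+1 < k)%N = false by have := ltn_ord b; lia.
by rewrite mul0r.
Qed.

Lemma pid_mulmx_Xke : (pid_mx k : 'M_n) *m X = 0.
Proof.
apply/matrixP => a b; rewrite pid_mulmxE XkeE [RHS]mxE.
case: ifP => // ha; case: ifP => // /andP [hb /eqP e].
have := ltn_ord b; lia.
Qed.

Lemma Xke_mulmx_pid : X *m pid_mx k = X.
Proof. by apply/matrixP => a b; rewrite mulmx_pidE XkeE; case: ifP => // ->. Qed.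

Lemma corner_minors_Xke : corner_minors k X != 0.
Proof.
apply/prodf_neq0 => m _; rewrite -det_tr det_trig; last first.
  apply/is_trig_mxP => i j ij; rewrite mxE lead_rowsE.
  case: ifP => _; last by case: eqP => // e; move: ij; rewrite e ltnn.
  rewrite /corner mulmx_pidE rev_pid_mulmxE XkeE.
  case: ifP => // _; case: ifP => // _; case: ifP => // /andP [_ /eqP /= e].
  have := ltn_ord j; lia.
apply/prodf_neq0 => i _; rewrite mxE lead_rowsE.
case: ifP => im; last by rewrite eqxx oner_eq0.
have ik : (i < k)%N by have := ltn_ord m; lia.
rewrite /corner mulmx_pidE rev_pid_mulmxE XkeE ik /=.
have -> : (n - i.+1 + i == n.-1)%N by apply/eqP; have := ltn_ord i; lia.
exact: Xke_coef_neq0.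
Qed.

End Xke.

(* For n = 2k, X = [[0, 0], [J, 0]] with J invertible and antidiagonal, so a
   matrix commuting with X is block lower triangular with diagonal blocks
   conjugate under J. *)
Lemma Xke_centralizer_det_ge0 (R : realType) k (eps : R) (s : 'M[R]_(k + k)) :
  (0 < k)%N -> (eps = 1 \/ eps = -1) ->
  s *m Xke R (k + k) k eps = Xke R (k + k) k eps *m s -> 0 <= \det s.
Proof.
move=> k_gt0 eps_sign sX.
pose J : 'M[R]_k := \matrix_(r, c) if (r + c == k.-1)%N then Xke_coef k eps c else 0.
pose J' : 'M[R]_k := \matrix_(r, c) if (r + c == k.-1)%N then (Xke_coef k eps r)^-1 else 0.
have XJ : Xke R (k + k) k eps = block_mx 0 0 J 0.
  apply/matrixP => i j; rewrite XkeE -[i]splitK -[j]splitK.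
  case: (fintype.split i) => i'; case: (fintype.split j) => j' /=;
    rewrite ?block_mxEul ?block_mxEur ?block_mxEdl ?block_mxEdr !mxE;
    have ri := ltn_ord i'; have rj := ltn_ord j'.
  - by case: ifP => // /andP [? /eqP ?]; exfalso; lia.
  - by case: ifP => // /andP [? /eqP ?]; exfalso; lia.
  - have -> : (k + i' + j' == (k + k).-1)%N = (i' + j' == k.-1)%N by apply/eqP/eqP; lia.
    by rewrite ltn_ord.
  - by case: ifP => // /andP [? /eqP ?]; exfalso; lia.
have JJ' : J *m J' = 1%:M.
  apply/matrixP => r c; rewrite !mxE; have := ltn_ord r => rk.
  rewrite (bigD1 (@Ordinal k (k.-1 - r) ltac:(lia))) //= big1 => [|m /negP mr]; last first.
    rewrite !mxE; case: ifP; rewrite ?mul0r // => /eqP e.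
    by case: mr; apply/eqP/val_inj => /=; lia.
  rewrite !mxE (_ : (r + (k.-1 - r) == k.-1)%N) /=; last by apply/eqP; lia.
  have -> : (k.-1 - r + c == k.-1)%N = (r == c).
    by rewrite -val_eqE /=; apply/eqP/eqP => h; have := ltn_ord c; lia.
  by rewrite addr0; case: eqP => _; rewrite ?mulr0 // mulfV ?Xke_coef_neq0.
have [uJ _] := mulmx1_unit JJ'.
move: sX; rewrite XJ -(submxK s) !mulmx_block !mulmx0 !mul0mx !addr0 !add0r.
move=> /eq_block_mx [_ _ TJ JQ].
have -> : ursubmx s = 0 by rewrite -[ursubmx s](mulKmx uJ) -JQ mulmx0.
have -> : drsubmx s = J *m ulsubmx s *m invmx J by rewrite -TJ mulmxK.
rewrite det_lblock !det_mulmx det_inv mulrAC mulfV ?mul1r; last by rewrite -unitfE -unitmxE.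
by rewrite -expr2 sqr_ge0.
Qed.

Section UpperTriangular.
Variables (R : fieldType) (n : nat).

Definition upper_trig (A : 'M[R]_n) : Prop := forall i j : 'I_n, (j < i)%N -> A i j = 0.

Lemma det_upper_trig (A : 'M[R]_n) : upper_trig A -> \det A = \prod_i A i i.
Proof.
move=> uA; rewrite -det_tr det_trig; last by apply/is_trig_mxP => i j ij; rewrite mxE uA.
by apply: eq_bigr => i _; rewrite mxE.
Qed.

Lemma upper_trig_mul (A B : 'M[R]_n) : upper_trig A -> upper_trig B -> upper_trig (A *m B).
Proof.
move=> uA uB i j ji; rewrite mxE big1 // => m _.
by case: (ltnP m i) => mi; [rewrite uA ?mul0r | rewrite uB ?mulr0 //; apply: leq_trans mi].
Qed.

Lemma upper_trig_diag (A : 'M[R]_n) d : upper_trig A -> upper_trig (A *m diag_mx d).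
Proof. by move=> uA i j ji; rewrite mul_mx_diag mxE uA ?mul0r. Qed.

Lemma upper_trig_inv (A : 'M[R]_n) : A \in unitmx -> upper_trig A -> upper_trig (invmx A).
Proof.
move=> uA trA i.
have Ajj j : A j j != 0.
  by move: uA; rewrite unitmxE unitfE det_upper_trig // => /prodf_neq0; apply.
suff IH m (j : 'I_n) : j = m :> nat -> (j < i)%N -> invmx A i j = 0 by move=> j; apply: IH.
elim/ltn_ind: m j => m IH j jm ji.
have /matrixP /(_ i j) := mulVmx uA; rewrite mxE (bigD1 j) //= big1 => [|l lj].
  rewrite addr0 mxE (negbTE (_ : i != j)); last by apply/eqP => e; rewrite e ltnn in ji.
  by move/eqP; rewrite mulf_eq0 (negbTE (Ajj j)) orbF => /eqP.
case: (ltngtP l j) => [lt_lj|lt_jl|/val_inj e]; last by rewrite e eqxx in lj.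
- by rewrite (IH l) ?mul0r -?jm //; apply: ltn_trans ji.
- by rewrite trA ?mulr0.
Qed.

End UpperTriangular.

Section AdjointAction.
Variables (R : realType) (n : nat).

Lemma invmx_mul (A B : 'M[R]_n) :
  A \in unitmx -> B \in unitmx -> invmx (A *m B) = invmx B *m invmx A.
Proof.
move=> uA uB.
have AB_inv : (A *m B) *m (invmx B *m invmx A) = 1%:M.
  by rewrite mulmxA -(mulmxA A) mulmxV // mulmx1 mulmxV.
by rewrite -[LHS]mulmx1 -AB_inv mulmxA mulVmx ?mul1mx // unitmx_mul uA uB.
Qed.

Lemma Ad_mul (a b Z : 'M[R]_n) : a \in unitmx -> b \in unitmx ->
  Ad a (Ad b Z) = Ad (a *m b) Z.
Proof. by move=> ua ub; rewrite /Ad invmx_mul // !mulmxA. Qed.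

Lemma Ad_invmxK (a Z : 'M[R]_n) : a \in unitmx -> Ad (invmx a) (Ad a Z) = Z.
Proof. by move=> ua; rewrite /Ad invmxK !mulmxA mulVmx // mul1mx mulmxKV. Qed.

Lemma SLupper_unit (a : 'M[R]_n) : SLupper R n a -> a \in unitmx.
Proof. by move=> [da _]; rewrite unitmxE da unitr1. Qed.

Lemma SLupper_mul (a b : 'M[R]_n) :
  SLupper R n a -> SLupper R n b -> SLupper R n (a *m b).
Proof.
by move=> [da ua] [db ub]; split; [rewrite det_mulmx da db mulr1 | apply: upper_trig_mul].
Qed.

Lemma SLupper_inv (a : 'M[R]_n) : SLupper R n a -> SLupper R n (invmx a).
Proof.
move=> Ba; have [da ua] := Ba.
by split; [rewrite det_inv da invr1 | apply: upper_trig_inv (SLupper_unit Ba) ua].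
Qed.

Lemma Ad_orbit_SLupper_Ad (c X : 'M[R]_n) : SLupper R n c ->
  Ad_orbit (SLupper R n) (Ad c X) = Ad_orbit (SLupper R n) X.
Proof.
move=> Bc; have uc := SLupper_unit Bc.
apply/seteqP; split => _ [a Ba <-].
  exists (a *m c); first exact: SLupper_mul.
  by rewrite Ad_mul // SLupper_unit.
exists (a *m invmx c); first by apply: SLupper_mul => //; apply: SLupper_inv.
have ua := SLupper_unit Ba.
by rewrite -Ad_mul ?Ad_invmxK ?unitmx_inv.
Qed.
End AdjointAction.

Lemma mulmx_colsE (T : pzSemiRingType) m n p (M : 'M[T]_(m, n))
    (f : 'I_p -> 'cV[T]_n) a j :
  (M *m \matrix_(b, j) f j b 0) a j = (M *m f j) a 0.
Proof. by rewrite !mxE; apply: eq_bigr => i _; rewrite mxE. Qed.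

Section Intertwiner.
Variables (R : realType) (n k : nat) (eps : R) (h : 'M[R]_n).
Hypotheses (k_gt0 : (0 < k)%N) (k2_le_n : (k.*2 <= n)%N).
Hypothesis eps_sign : eps = 1 \/ eps = -1.
Hypothesis h_unit : h \in unitmx.
Local Notation X := (Xke R n k eps).
Local Notation Y := (Ad h X).
Local Notation P := (pid_mx k : 'M[R]_n).
Local Notation e i := (delta_mx i 0 : 'cV[R]_n).
Hypothesis Y_minors : corner_minors k Y != 0.

Fact k_le_n : (k <= n)%N.
Proof. by rewrite (leq_trans _ k2_le_n) // -addnn leq_addr. Qed.

Lemma lead_rows_corner_unit m : (m <= k)%N -> lead_rows m (corner k Y) \in unitmx.
Proof.
move=> mk; rewrite unitmxE unitfE.
by move/prodf_neq0: Y_minors => /(_ (Ordinal (mk : (m < k.+1)%N)) isT).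
Qed.

Lemma Ad_Xke_sqr : Y *m Y = 0.
Proof.
rewrite /Ad !mulmxA mulmxKV // -(mulmxA h) (@Xke_sqr R n k eps) //.
by rewrite mulmx0 mul0mx.
Qed.

Definition pivot_col (i : 'I_n) : 'cV[R]_n := invmx (lead_rows i (corner k Y)) *m e i.

Lemma lead_rows_pivot_col (i : 'I_n) : (i < k)%N ->
  lead_rows i (corner k Y) *m pivot_col i = e i.
Proof. by move=> ik; rewrite mulKVmx // lead_rows_corner_unit // ltnW. Qed.

Lemma pivot_col_lower (i a : 'I_n) : (i < k)%N -> (i <= a)%N ->
  pivot_col i a 0 = (a == i)%:R.
Proof.
move=> ik ia; have /matrixP /(_ a 0) := lead_rows_pivot_col ik.
by rewrite lead_rows_mulmxE ltnNge ia /= => ->; rewrite mxE eqxx andbT.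
Qed.

Lemma pid_pivot_col (i : 'I_n) : (i < k)%N -> P *m pivot_col i = pivot_col i.
Proof.
move=> ik; apply/matrixP => a b; rewrite pid_mulmxE ord1.
case: (ltnP a k) => // ka; rewrite pivot_col_lower //; last exact: leq_trans (ltnW ik) ka.
by case: eqP => // ai; rewrite ai leqNgt ik in ka.
Qed.

Lemma corner_pivot_col_upper (i r : 'I_n) : (i < k)%N -> (r < i)%N ->
  (corner k Y *m pivot_col i) r 0 = 0.
Proof.
move=> ik ri; have /matrixP /(_ r 0) := lead_rows_pivot_col ik.
rewrite lead_rows_mulmxE ri => ->; rewrite mxE.
by case: eqP => // ri'; rewrite ri' ltnn in ri.
Qed.

Lemma corner_pivot_col_diag (i : 'I_n) : (i < k)%N ->
  (corner k Y *m pivot_col i) i 0 != 0.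
Proof.
move=> ik; apply/eqP => ci0.
suff : lead_rows i.+1 (corner k Y) *m pivot_col i = 0.
  move/(congr1 (mulmx (invmx (lead_rows i.+1 (corner k Y))))).
  rewrite mulKmx ?lead_rows_corner_unit // mulmx0 => /matrixP /(_ i 0).
  by rewrite pivot_col_lower // eqxx mxE => /eqP; rewrite oner_eq0.
apply/matrixP => r b; rewrite lead_rows_mulmxE ord1 [RHS]mxE.
case: (ltngtP r i) => [ri|ir|/val_inj ->]; last by rewrite ltnSn.
- by rewrite ltnS ltnW // corner_pivot_col_upper.
- by rewrite ltnNge ir /= pivot_col_lower ?(ltnW ir) // (gtn_eqF ir : (r == i) = false).
Qed.

Definition top_inv : 'M[R]_n := P *m invmx h.

Definition top_inv_block : 'M[R]_n := top_inv *m P + copid_mx k.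

Lemma Ad_Xke_top_inv : Y = h *m X *m top_inv.
Proof. by rewrite /top_inv /Ad -{1}(@Xke_mulmx_pid R n k eps) !mulmxA. Qed.

Lemma top_inv_block_unit : top_inv_block \in unitmx.
Proof.
have factor : lead_rows k (corner k Y) =
    (rev_pid_mx k *m (h *m X) + copid_mx k) *m top_inv_block.
  have hXc : h *m X *m copid_mx k = 0.
    by rewrite /copid_mx mulmxBr mulmx1 -mulmxA (@Xke_mulmx_pid R n k eps) subrr.
  have cPc : copid_mx k *m top_inv *m P = 0.
    by rewrite /top_inv mulmxA (@mul_copid_mx_pid _ n n) ?mul0mx ?k_le_n.
  have cc : copid_mx k *m copid_mx k = copid_mx k :> 'M[R]_n.
    by rewrite copid_mx_id ?k_le_n.
  rewrite lead_rows_corner /top_inv_block /corner Ad_Xke_top_inv.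
  move: (h *m X) top_inv (copid_mx k) hXc cPc cc => U V C UC CVP CC.
  by rewrite mulmxDl !mulmxDr !mulmxA -(mulmxA _ U C) UC mulmx0 addr0 CVP add0r CC.
have := lead_rows_corner_unit (leqnn k).
by rewrite factor unitmx_mul => /andP [].
Qed.

Definition kernel_corr (j : 'I_n) : 'cV[R]_n := invmx top_inv_block *m (top_inv *m e j).

Lemma top_inv_block_low (v : 'cV[R]_n) (a : 'I_n) : (k <= a)%N ->
  (top_inv_block *m v) a 0 = v a 0.
Proof.
move=> ka; rewrite /top_inv_block mulmxDl [(_ + _ : 'cV_n) a 0]mxE.
by rewrite /top_inv -!mulmxA pid_mulmxE copid_mulmxE ltnNge ka add0r.
Qed.

Lemma kernel_corr_low (j a : 'I_n) : (k <= a)%N -> kernel_corr j a 0 = 0.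
Proof.
move=> ka; rewrite -top_inv_block_low // mulKVmx ?top_inv_block_unit //.
by rewrite /top_inv -!mulmxA pid_mulmxE ltnNge ka.
Qed.

Lemma pid_kernel_corr j : P *m kernel_corr j = kernel_corr j.
Proof.
apply/matrixP => a b; rewrite pid_mulmxE ord1.
by case: (ltnP a k) => // ka; rewrite kernel_corr_low.
Qed.

Lemma Ad_Xke_kernel_corr j : Y *m (e j - kernel_corr j) = 0.
Proof.
have top_inv_corr : top_inv *m kernel_corr j = top_inv *m e j.
  have : top_inv_block *m kernel_corr j = top_inv *m e j.
    by rewrite mulKVmx ?top_inv_block_unit.
  rewrite /top_inv_block mulmxDl -mulmxA pid_kernel_corr /copid_mx mulmxBl mul1mx.
  by rewrite pid_kernel_corr subrr addr0.
by rewrite Ad_Xke_top_inv mulmxBr -!(mulmxA (h *m X)) top_inv_corr subrr.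
Qed.

(* The columns f_j satisfy Y f_j = c_j f_(n-1-j) for j < k and Y f_j = 0
   otherwise, with c_j = Xke_coef k eps j.  A pivot column f_j (j < k) has
   its last nonzero entry, 1, on the diagonal; so has f_(n-1-j) = Y f_j / c_j,
   since Y f_j vanishes in the rows n-1-r, r < j.  The middle columns are e_j
   moved into ker Y by a vector supported on the first k coordinates. *)
Definition intertwiner_col (j : 'I_n) : 'cV[R]_n :=
  if (j < k)%N then pivot_col j
  else if (j < n - k)%N then e j - kernel_corr j
  else (Xke_coef k eps (rev_ord j))^-1 *: (Y *m pivot_col (rev_ord j)).

Definition intertwiner : 'M[R]_n := \matrix_(a, j) intertwiner_col j a 0.

Lemma Ad_Xke_pivot_colE (i r : 'I_n) : (i < k)%N -> (rev_ord r < k)%N ->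
  (Y *m pivot_col i) r 0 = (corner k Y *m pivot_col i) (rev_ord r) 0.
Proof. by move=> ik rk; rewrite corner_mulmxE ?pid_pivot_col // rk rev_ordK. Qed.

Lemma kernel_colE (j a : 'I_n) :
  (e j - kernel_corr j) a 0 = (a == j)%:R - kernel_corr j a 0.
Proof.
rewrite [(_ - _ : 'cV_n) a 0]mxE [(- _ : 'cV_n) a 0]mxE.
by rewrite [delta_mx _ _ _ _]mxE andbT.
Qed.

Lemma Ad_Xke_intertwiner : Y *m intertwiner = intertwiner *m X.
Proof.
apply/matrixP => a j; rewrite mulmx_colsE mulmx_XkeE // [in RHS]mxE.
rewrite /intertwiner_col; have /= jn := ltn_ord j.
case: ifP => jk.
  have -> : (rev_ord j < k)%N = false by rewrite /=; lia.
  have -> : (rev_ord j < n - k)%N = false by rewrite /=; lia.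
  rewrite rev_ordK [(_ *: _ : 'cV_n) a 0]mxE (_ : n - (n - j.+1).+1 = j)%N; last lia.
  rewrite mulrAC mulVf ?mul1r //.
  exact: Xke_coef_neq0.
case: ifP => _; first by rewrite Ad_Xke_kernel_corr mxE.
by rewrite -scalemxAr mulmxA Ad_Xke_sqr mul0mx scaler0 mxE.
Qed.

Lemma intertwiner_upper : upper_trig intertwiner.
Proof.
move=> a j ja; rewrite mxE /intertwiner_col; have /= an := ltn_ord a.
case: ifP => jk.
  by rewrite pivot_col_lower ?(ltnW ja) // (gtn_eqF ja : (a == j) = false).
case: ifP => jnk.
  by rewrite kernel_colE kernel_corr_low ?(gtn_eqF ja : (a == j) = false) ?subr0 //; lia.
rewrite [(_ *: _ : 'cV_n) a 0]mxE Ad_Xke_pivot_colE /=; try lia.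
by rewrite corner_pivot_col_upper ?mulr0 //=; lia.
Qed.

Lemma intertwiner_diag_neq0 j : intertwiner j j != 0.
Proof.
rewrite mxE /intertwiner_col; have /= jn := ltn_ord j.
case: ifP => jk; first by rewrite pivot_col_lower // eqxx oner_eq0.
case: ifP => jnk.
  by rewrite kernel_colE kernel_corr_low ?eqxx ?subr0 ?oner_eq0 //; lia.
rewrite [(_ *: _ : 'cV_n) j 0]mxE mulf_neq0 ?invr_eq0 ?Xke_coef_neq0 //.
by rewrite Ad_Xke_pivot_colE ?corner_pivot_col_diag //=; lia.
Qed.

Lemma intertwiner_unit : intertwiner \in unitmx.
Proof.
rewrite unitmxE unitfE (det_upper_trig intertwiner_upper).
by apply/prodf_neq0 => j _; apply: intertwiner_diag_neq0.
Qed.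

End Intertwiner.

Lemma prod_if_eq (T : comPzSemiRingType) (I : finType) (i : I) (x : T) :
  \prod_j (if j == i then x else 1) = x.
Proof. by rewrite -big_mkcond big_pred1_eq. Qed.

Section DiagonalCorrection.
Variables (R : realType) (n k : nat) (eps : R).
Hypotheses (k_gt0 : (0 < k)%N) (k2_le_n : (k.*2 <= n)%N).
Hypothesis eps_sign : eps = 1 \/ eps = -1.
Local Notation X := (Xke R n k eps).

Lemma diag_mx_Xke_comm (d : 'rV[R]_n) :
  (forall a b : 'I_n, (b < k)%N -> (a + b)%N = n.-1 -> d 0 a = d 0 b) ->
  diag_mx d *m X = X *m diag_mx d.
Proof.
move=> dX; apply/matrixP => a b; rewrite mul_diag_mx mul_mx_diag mxE [RHS]mxE XkeE.
case: ifP => [/andP [bk /eqP ab]|_]; last by rewrite mulr0 mul0r.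
by rewrite (dX a b bk ab) mulrC.
Qed.

(* X only couples the coordinates j and n-1-j, j < k, so a diagonal matrix
   constant on these pairs commutes with X: scale the coordinates 0 and n-1
   alike, or, when 2k < n, the uncoupled coordinate k alone. *)
Lemma Xke_diag_centralizer (delta : R) : 0 < delta \/ (k.*2 < n)%N ->
  exists d : 'rV[R]_n, diag_mx d *m X = X *m diag_mx d /\ \prod_j d 0 j = delta.
Proof.
have k_lt_n : (k < n)%N by rewrite (leq_trans _ k2_le_n) // -addnn -addn1 leq_add2l.
case=> [delta_gt0|k2_lt_n].
  pose i0 : 'I_n := Ordinal (leq_ltn_trans (leq0n k) k_lt_n).
  pose l := Num.sqrt delta.
  exists (\row_j ((if j == i0 then l else 1) * (if j == rev_ord i0 then l else 1))).
  split.
    apply: diag_mx_Xke_comm => a b bk ab; rewrite !mxE -!val_eqE /=.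
    have -> : (a == 0 :> nat) = (b == (n - 1)%N :> nat) by apply/eqP/eqP; lia.
    have -> : (a == (n - 1)%N :> nat) = (b == 0 :> nat) by apply/eqP/eqP; lia.
    exact: mulrC.
  rewrite (eq_bigr (fun j => (if j == i0 then l else 1) * (if j == rev_ord i0 then l else 1)));
    last by move=> j _; rewrite mxE.
  by rewrite big_split /= !prod_if_eq -expr2 sqr_sqrtr // ltW.
pose kk : 'I_n := Ordinal k_lt_n.
exists (\row_j (if j == kk then delta else 1)); split; last first.
  by rewrite -[RHS](prod_if_eq kk); apply: eq_bigr => j _; rewrite mxE.
apply: diag_mx_Xke_comm => a b bk ab; rewrite !mxE -!val_eqE /=.
have -> : (a == k :> nat) = false by apply/negbTE/eqP; lia.
by have -> : (b == k :> nat) = false by apply/negbTE/eqP; lia.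
Qed.

Lemma Ad_Xke_SLupper_conj (h : 'M[R]_n) : h \in unitmx -> 0 < \det h ->
  corner_minors k (Ad h X) != 0 -> exists2 b, SLupper R n b & Ad h X = Ad b X.
Proof.
move=> h_unit h_pos Y_minors.
set F := @intertwiner R n k eps h.
have F_unit : F \in unitmx by apply: intertwiner_unit.
have FX : Ad h X = F *m X *m invmx F.
  by rewrite -(@Ad_Xke_intertwiner R n k eps h) ?mulmxK.
have detF_neq0 : \det F != 0 by rewrite -unitfE -unitmxE.
have sign : 0 < (\det F)^-1 \/ (k.*2 < n)%N.
  move: k2_le_n; rewrite leq_eqVlt => /orP [/eqP n_eq|]; [left | by right].
  have sX : (invmx F *m h) *m X = X *m (invmx F *m h).
    have hX : h *m X = Ad h X *m h by rewrite /Ad mulmxKV.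
    by rewrite -mulmxA hX FX !mulmxA mulVmx // mul1mx.
  have := @Xke_centralizer_det_ge0 R k eps; rewrite addnn n_eq.
  move=> /(_ _ k_gt0 eps_sign sX); rewrite det_mulmx det_inv.
  by rewrite pmulr_lge0 // le0r invr_eq0 (negbTE detF_neq0).
have [d [dX d_prod]] := Xke_diag_centralizer sign.
have d_unit : diag_mx d \in unitmx.
  by rewrite unitmxE unitfE det_diag d_prod invr_eq0.
exists (F *m diag_mx d).
  split; first by rewrite det_mulmx det_diag d_prod mulfV.
  exact/upper_trig_diag/intertwiner_upper.
rewrite FX /Ad invmx_mul // -[F *m diag_mx d *m X]mulmxA dX !mulmxA.
by rewrite -(mulmxA _ (diag_mx d)) mulmxV // mulmx1.
Qed.

End DiagonalCorrection.

Lemma map_corner_minors (T1 T2 : comNzRingType) (f : {rmorphism T1 -> T2}) n k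
    (Y : 'M[T1]_n) :
  f (corner_minors k Y) = corner_minors k (map_mx f Y).
Proof.
rewrite rmorph_prod; apply: eq_bigr => m _; rewrite -det_map_mx.
have map_rev_pid : map_mx f (rev_pid_mx k) = rev_pid_mx k :> 'M_n.
  by apply/matrixP => i j; rewrite !mxE rmorph_nat.
by rewrite /lead_rows /corner map_mxD !map_mxM map_rev_pid !(map_pid_mx f) map_copid_mx.
Qed.

Section Continuity.
Variables (R : realType) (T : topologicalType).

Lemma continuous_bigsum (I : Type) (r : seq I) (F : I -> T -> R) :
  (forall i, continuous (F i)) -> continuous (fun x => \sum_(i <- r) F i x).
Proof.
move=> Fc; elim: r => [|i r IH] x.
  by under eq_fun do rewrite big_nil; exact: cst_continuous.
by under eq_fun do rewrite big_cons; exact: continuousD (Fc i x) (IH x).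
Qed.

Lemma continuous_bigprod (I : Type) (r : seq I) (F : I -> T -> R) :
  (forall i, continuous (F i)) -> continuous (fun x => \prod_(i <- r) F i x).
Proof.
move=> Fc; elim: r => [|i r IH] x.
  by under eq_fun do rewrite big_nil; exact: cst_continuous.
by under eq_fun do rewrite big_cons; exact: continuousM (Fc i x) (IH x).
Qed.

Lemma continuous_mulr (f g : T -> R) :
  continuous f -> continuous g -> continuous (fun x => f x * g x).
Proof. by move=> fc gc x; exact: continuousM (fc x) (gc x). Qed.

Definition entrywise_continuous p q (f : T -> 'M[R]_(p, q)) :=
  forall i j, continuous (fun x => f x i j).

Lemma continuous_det p (f : T -> 'M[R]_p) :
  entrywise_continuous f -> continuous (fun x => \det (f x)).
Proof.
move=> fc; apply: continuous_bigsum => s /=.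
apply: continuous_mulr; first exact: cst_continuous.
by apply: continuous_bigprod => i; apply: fc.
Qed.

Lemma entrywise_continuous_mulmx p q r (f : T -> 'M[R]_(p, q)) (g : T -> 'M[R]_(q, r)) :
  entrywise_continuous f -> entrywise_continuous g ->
  entrywise_continuous (fun x => f x *m g x).
Proof.
move=> fc gc i j; under eq_fun do rewrite mxE.
by apply: continuous_bigsum => l; apply: continuous_mulr; [apply: fc | apply: gc].
Qed.

Lemma entrywise_continuous_cst p q (A : 'M[R]_(p, q)) : entrywise_continuous (fun=> A).
Proof. by move=> i j; exact: cst_continuous. Qed.

Lemma entrywise_continuous_lead_rows p m (f : T -> 'M[R]_p) :
  entrywise_continuous f -> entrywise_continuous (fun x => lead_rows m (f x)).
Proof.
move=> fc i j /=; under eq_fun do rewrite lead_rowsE.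
by case: (i < m)%N; [apply: fc | exact: cst_continuous].
Qed.

End Continuity.

Lemma continuous_corner_minors (R : realType) n k :
  continuous (corner_minors k : 'M[R]_n -> R).
Proof.
apply: continuous_bigprod => m; apply/continuous_det/entrywise_continuous_lead_rows.
apply: entrywise_continuous_mulmx; last exact: entrywise_continuous_cst.
apply: entrywise_continuous_mulmx; first exact: entrywise_continuous_cst.
by move=> i j; exact: coord_continuous.
Qed.

Lemma exists_nonroot_itv (R : realType) (p : {poly R}) d : p != 0 -> 0 < d ->
  exists2 t, 0 < t < d & p.[t] != 0.
Proof.
move=> p_neq0 d_gt0; apply/not_exists2P => no_nonroot.
pose ts := [seq d / (i.+2)%:R | i <- iota 0 (size p)].
have ts_uniq : uniq ts.
  rewrite map_inj_uniq ?iota_uniq // => i j /(mulfI (lt0r_neq0 d_gt0)) /invr_inj /eqP.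
  by rewrite eqr_nat => /eqP [].
have ts_roots : all (root p) ts.
  apply/allP => _ /mapP [i _ ->]; apply/negPn/negP => ti_root.
  have [] := no_nonroot (d / (i.+2)%:R); apply => //.
  by rewrite divr_gt0 ?ltr0n //= ltr_pdivrMr ?ltr0n // ltr_pMr // ltr1n.
by have := max_poly_roots p_neq0 ts_roots ts_uniq; rewrite size_map size_iota ltnn.
Qed.

Lemma cvg_entrywise (R : realType) (U : Type) (F : set_system U) {FF : Filter F}
    p q (f : U -> 'M[R]_(p, q)) (A : 'M[R]_(p, q)) :
  (forall i j, (fun x => f x i j) @ F --> A i j) -> f @ F --> A.
Proof.
move=> fA B /nbhs_ballP [e e_gt0 eB].
have fAe : \forall x \near F, forall i j, ball (A i j) e (f x i j).
  apply: filter_forall => i; apply: filter_forall => j.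
  exact: fA _ (nbhsx_ballx _ _ e_gt0).
by apply: filterS fAe => x fx; apply: eB.
Qed.

Lemma cvg_poly_frac_mx (R : realType) p q (D : {poly R}) (Z : 'M[{poly R}]_(p, q)) t0 :
  D.[t0] != 0 ->
  (fun t => D.[t]^-1 *: map_mx (horner_eval t) Z) @ t0 -->
  D.[t0]^-1 *: map_mx (horner_eval t0) Z.
Proof.
move=> D_neq0; apply: cvg_entrywise => i j.
under eq_fun do rewrite !mxE horner_evalE.
rewrite !mxE horner_evalE.
have D_inv : (fun t => D.[t]^-1) @ t0 --> D.[t0]^-1.
  exact: cvgV D_neq0 (@continuous_horner R D t0).
exact: cvgM D_inv (@continuous_horner R (Z i j) t0).
Qed.

Section LinearPath.
Variables (R : realType) (n k : nat) (eps : R) (g : 'M[R]_n).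
Hypotheses (k_gt0 : (0 < k)%N) (k2_le_n : (k.*2 <= n)%N).
Hypothesis eps_sign : eps = 1 \/ eps = -1.
Local Notation X := (Xke R n k eps).
Local Notation G t := (g + t *: (1%:M - g)).

Definition lin_path : 'M[{poly R}]_n := map_mx polyC g + 'X *: map_mx polyC (1%:M - g).

Definition lin_path_conj : 'M[{poly R}]_n := lin_path *m map_mx polyC X *m \adj lin_path.

Definition lin_path_minors : {poly R} := \det lin_path * corner_minors k lin_path_conj.

Lemma lin_pathE t : map_mx (horner_eval t) lin_path = G t.
Proof. by apply/matrixP => i j; rewrite !mxE horner_evalE !hornerE. Qed.

Lemma det_lin_pathE t : (\det lin_path).[t] = \det (G t).
Proof. by rewrite -lin_pathE det_map_mx. Qed.

Lemma lin_path_conjE t : map_mx (horner_eval t) lin_path_conj = G t *m X *m \adj (G t).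
Proof.
have evalC (A : 'M[R]_n) : map_mx (horner_eval t) (map_mx polyC A) = A.
  by apply/matrixP => i j; rewrite !mxE horner_evalE hornerC.
by rewrite !map_mxM map_mx_adj evalC lin_pathE.
Qed.

Lemma Ad_lin_pathE t : \det (G t) != 0 ->
  Ad (G t) X = (\det lin_path).[t]^-1 *: map_mx (horner_eval t) lin_path_conj.
Proof.
move=> Gt_det.
by rewrite lin_path_conjE det_lin_pathE /Ad /invmx unitmxE unitfE Gt_det scalemxAr.
Qed.

Lemma lin_path_minors_neq0 : lin_path_minors != 0.
Proof.
apply: contra_neq (corner_minors_Xke k_gt0 k2_le_n eps_sign) => /(congr1 (horner^~ 1)).
rewrite /= hornerM horner0 det_lin_pathE -horner_evalE map_corner_minors lin_path_conjE.
by rewrite scale1r addrC subrK adj1 mul1mx mulmx1 det1 mul1r.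
Qed.

Lemma Ad_lin_path_minors t : lin_path_minors.[t] != 0 ->
  corner_minors k (Ad (G t) X) != 0.
Proof.
rewrite hornerM mulf_eq0 negb_or => /andP [Gt_det minors_t].
rewrite det_lin_pathE in Gt_det; rewrite Ad_lin_pathE //; apply: corner_minorsZ.
  by rewrite invr_eq0 det_lin_pathE.
by rewrite -map_corner_minors; exact: minors_t.
Qed.

Lemma Ad_lin_path_cvg : \det g != 0 -> (fun t => Ad (G t) X) @ 0 --> Ad g X.
Proof.
move=> g_det; have D0 : (\det lin_path).[0] != 0 by rewrite det_lin_pathE scale0r addr0.
have lim0 : (\det lin_path).[0]^-1 *: map_mx (horner_eval 0) lin_path_conj = Ad g X.
  by rewrite -Ad_lin_pathE scale0r addr0 // scale0r addr0.
move=> V; rewrite -lim0 => /(cvg_poly_frac_mx (Z := lin_path_conj) D0) V_near.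
have near_unit : \forall t \near 0, (\det lin_path).[t] != 0.
  exact: cvgr_neq0 _ (@continuous_horner R _ 0) D0.
apply: filterS2 near_unit V_near => t; rewrite det_lin_pathE => Gt_det.
by rewrite /= Ad_lin_pathE.
Qed.

Lemma det_lin_path_gt0 : \det g = 1 -> \forall t \near 0, 0 < \det (G t).
Proof.
move=> g_det.
have D0 : 0 < (\det lin_path).[0] by rewrite det_lin_pathE scale0r addr0 g_det ltr01.
near=> t; rewrite -det_lin_pathE; near: t.
exact: cvgr_gt _ (@continuous_horner R (\det lin_path) 0) _ D0.
Unshelve. all: by end_near.
Qed.

Lemma Ad_SL_Xke_in_closure : \det g = 1 ->
  closure (Ad_orbit (SLupper R n) X) (Ad g X).
Proof.
move=> g_det V gV; have g_neq0 : \det g != 0 by rewrite g_det oner_eq0.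
have Ad_near : \forall t \near 0, V (Ad (G t) X) := Ad_lin_path_cvg g_neq0 gV.
have [d d_gt0 dP] := (nbhs_ballP _ _).1 (filterI Ad_near (det_lin_path_gt0 g_det)).
have [t /andP [t_gt0 t_lt_d] Qt] := exists_nonroot_itv lin_path_minors_neq0 d_gt0.
have [Vt Gt_pos] : V (Ad (G t) X) /\ 0 < \det (G t).
  by apply: dP; rewrite -ball_normE /= sub0r normrN gtr0_norm.
have Gt_unit : G t \in unitmx by rewrite unitmxE unitfE lt0r_neq0.
have [b Bb Gt_b] := Ad_Xke_SLupper_conj k_gt0 k2_le_n eps_sign Gt_unit Gt_pos
  (Ad_lin_path_minors Qt).
by exists (Ad (G t) X); split => //; exists b.
Qed.

End LinearPath.

Unset Implicit Arguments.

Theorem lemma3p1 (R : realType) (n k : nat) (eps : R) :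
  (4 <= n)%N -> (2 <= k)%N -> (k.*2 <= n)%N -> (eps = 1 \/ eps = -1) ->
  let X := Xke R n k eps in
  let O := Ad_orbit (SL R n) X in
  sl R n X /\
  dense_in (T := 'M[R]_n) (Ad_orbit (SLupper R n) X) O /\
  (forall Y, O Y -> dense_in (T := 'M[R]_n) (Ad_orbit (SLupper R n) Y) O ->
     Ad_orbit (SLupper R n) Y = Ad_orbit (SLupper R n) X).
Proof.
move=> _ k_ge2 k2_le_n eps_sign X O.
have k_gt0 : (0 < k)%N by apply: leq_trans k_ge2.
have OX : O X by exists 1%:M; rewrite /SL /= ?det1 // /Ad invmx1 mul1mx mulmx1.
split; first exact: Xke_trace.
split.
  split; first by move=> _ [b [b_det _] <-]; exists b.
  by move=> _ [g g_det <-]; apply: Ad_SL_Xke_in_closure.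
move=> _ [g g_det <-] [_ dense].
have near_X : nbhs X [set M | corner_minors k M != 0].
  exact: cvgr_neq0 _ (@continuous_corner_minors R n k X)
    (corner_minors_Xke k_gt0 k2_le_n eps_sign).
have [_ [[a Ba <-] a_minors]] := dense X OX _ near_X.
have g_unit : g \in unitmx by rewrite unitmxE g_det unitr1.
have a_unit := SLupper_unit Ba.
have ag_unit : a *m g \in unitmx by rewrite unitmx_mul a_unit g_unit.
have ag_pos : 0 < \det (a *m g) by rewrite det_mulmx Ba.1 g_det mul1r ltr01.
rewrite /= Ad_mul // in a_minors.
have [b Bb ab] := Ad_Xke_SLupper_conj k_gt0 k2_le_n eps_sign ag_unit ag_pos a_minors.
rewrite -(Ad_orbit_SLupper_Ad (Ad g X) Ba) Ad_mul // ab.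
exact: Ad_orbit_SLupper_Ad.
Qed.
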